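(* Let $\Gamma_\mu:\mathbb{R}^N_+\to\mathbb{R}^N_+$ be monotone and satisfy the small gain condition $\Gamma_\mu(s)\not\geq s$ for all $s\in\mathbb{R}^N_+\setminus\{0\}$. Let $\kappa_0>0$, $\kappa_\Gamma>\kappa_h>0$ and let $\phi:\mathbb{R}^N_+\to\mathbb{R}^N$ be defined by $$\phi(v)=\Gamma_\mu(v)\Big(1+\min\Big\{0,\frac{\kappa_\Gamma-2\|v\|}{\|v\|+\kappa_0}\Big\}\Big)+\max\{0,\kappa_h-2\|v\|\}\,e .$$ If $s\in\mathbb{R}^N_+$ satisfies $s=\phi(s)$, then $\Gamma_\mu(s)\ll s$ (i.e. $s\in\Omega(\Gamma_\mu)$) and $\|s\|<\kappa_h/2$.
   Context: On $\mathbb{R}^N$: $v\geq w$ iff $v_i\ge w_i$ for all $i$; $v>w$ iff $v\ge w$ and $v\ne w$; $v\gg w$ iff $v_i>w_i$ for all $i$; $\not\geq$ is the negation of $\geq$. $\|\cdot\|$ is the Euclidean norm and $e=(1,\dots,1)^\top\in\mathbb{R}^N$. A map $T:\mathbb{R}^N_+\to\mathbb{R}^N_+$ is monotone if $v\le w$ implies $T(v)\le T(w)$. The decay set is $\Omega(\Gamma_\mu)=\{s\in\mathbb{R}^N_+:\Gamma_\mu(s)\ll s\}$. *)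

(* R^N is rendered as functions 'I_N -> R over an arbitrary
   real closed field R (the statement is purely order-algebraic). *)
From HB Require Import structures.
From mathcomp Require Import all_boot all_order all_algebra.
Set Implicit Arguments. Unset Strict Implicit. Unset Printing Implicit Defensive.
Import Order.TTheory GRing.Theory Num.Theory.
Local Open Scope ring_scope.

Definition vec (R : rcfType) (N : nat) := 'I_N -> R.

Definition nonneg (R : rcfType) (N : nat) (v : vec R N) : Prop :=
  forall i, 0 <= v i.
Definition vle (R : rcfType) (N : nat) (v w : vec R N) : Prop :=
  forall i, v i <= w i.
Definition vll (R : rcfType) (N : nat) (v w : vec R N) : Prop :=
  forall i, v i < w i.
Definition vzero (R : rcfType) (N : nat) : vec R N := fun _ => 0.
Definition enorm (R : rcfType) (N : nat) (v : vec R N) : R :=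
  Num.sqrt (\sum_(i < N) v i ^+ 2).

Definition monotone (R : rcfType) (N : nat) (T : vec R N -> vec R N) : Prop :=
  forall v w, nonneg v -> nonneg w -> vle v w -> vle (T v) (T w).

Definition maps_nonneg (R : rcfType) (N : nat) (T : vec R N -> vec R N) : Prop :=
  forall v, nonneg v -> nonneg (T v).

Definition small_gain (R : rcfType) (N : nat) (T : vec R N -> vec R N) : Prop :=
  forall s, nonneg s -> s <> @vzero R N -> ~ vle s (T s).

Definition decay_set (R : rcfType) (N : nat) (T : vec R N -> vec R N) (s : vec R N) : Prop :=
  nonneg s /\ vll (T s) s.

Definition phi (R : rcfType) (N : nat) (Gamma : vec R N -> vec R N)
  (k0 kG kh : R) (v : vec R N) : vec R N :=
  fun i => Gamma v i * (1 + Num.min 0 ((kG - 2 * enorm v) / (enorm v + k0)))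
           + Num.max 0 (kh - 2 * enorm v) * 1.

From HB Require Import structures.
From mathcomp Require Import all_boot all_order all_algebra.
Import Order.TTheory GRing.Theory Num.Theory.
Local Open Scope ring_scope.

(* Write n = |v| for the Euclidean norm.  The map phi v is a rescaling of
   Gamma v by a factor  c(v) = 1 + min(0, (kG - 2n)/(n + k0)) <= 1  plus the
   offset  max(0, kh - 2n) e.  Two regimes are analysed separately:
   - if 2n >= kh the offset vanishes and phi v <= Gamma v componentwise
     (Gamma v being nonnegative), so a nonzero fixed point s would satisfy
     s <= Gamma s, contradicting the small gain condition; since 2n >= kh > 0
     forces s <> 0, every fixed point has 2|s| < kh;
   - if 2n < kh < kG the factor is exactly 1 and the offset is positive, so
     phi v = Gamma v + (kh - 2n) e, whence a fixed point satisfies Gamma s << s. *)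

Section BlendedMap.

Context {R : rcfType} {N : nat} {Gamma : vec R N -> vec R N}.

Lemma enorm_ge0 (v : vec R N) : 0 <= enorm v.
Proof. exact: sqrtr_ge0. Qed.

Lemma enorm_vzero : enorm (@vzero R N) = 0.
Proof.
rewrite /enorm /vzero; under eq_bigr do rewrite expr0n /=.
by rewrite big1 // sqrtr0.
Qed.

Context {k0 kG kh : R}.

(* Large-norm regime: the offset vanishes and the factor is at most 1,
   so phi only shrinks the nonnegative vector Gamma v. *)
Lemma phi_le_Gamma (v : vec R N) :
  nonneg (Gamma v) -> kh <= 2 * enorm v -> vle (phi Gamma k0 kG kh v) (Gamma v).
Proof.
move=> hG hbig i; rewrite /phi.
have -> : Num.max 0 (kh - 2 * enorm v) = 0 by apply/max_idPl; rewrite subr_le0.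
rewrite mul0r addr0.
set c := 1 + _.
have hc1 : c <= 1 by rewrite /c gerDl ge_min lexx.
have hGi := hG i.
have [hc0|hc0] := lerP c 0; last by rewrite ler_piMr.
by apply: le_trans hGi; rewrite mulr_ge0_le0.
Qed.

Lemma phi_small_norm (v : vec R N) (i : 'I_N) :
  0 <= k0 -> kh < kG -> 2 * enorm v < kh ->
  phi Gamma k0 kG kh v i = Gamma v i + (kh - 2 * enorm v).
Proof.
move=> hk0 hkGh hsmall; rewrite /phi.
have hoff : 0 < kh - 2 * enorm v by rewrite subr_gt0.
have -> : Num.min 0 ((kG - 2 * enorm v) / (enorm v + k0)) = 0.
  apply/min_idPl/divr_ge0; last exact: addr_ge0 (enorm_ge0 v) hk0.
  by rewrite subr_ge0 ltW // (lt_trans hsmall).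
by rewrite addr0 mulr1 mulr1 (max_idPr (ltW hoff)).
Qed.

Lemma fixed_point_small_norm (s : vec R N) :
  maps_nonneg Gamma -> small_gain Gamma -> 0 < kh ->
  nonneg s -> s = phi Gamma k0 kG kh s -> 2 * enorm s < kh.
Proof.
move=> hmaps hsg hkh hs hfix; rewrite ltNge; apply/negP => hbig.
have hnz : s <> @vzero R N.
  move=> hz; move: hbig; rewrite hz enorm_vzero mulr0.
  by rewrite leNgt hkh.
apply: (hsg s hs hnz); rewrite {1}hfix.
exact: phi_le_Gamma (hmaps s hs) hbig.
Qed.

End BlendedMap.

Theorem mainTheorem2 (R : rcfType) (N : nat) (Gamma : vec R N -> vec R N)
  (hmaps : maps_nonneg Gamma) (hmono : monotone Gamma) (hsg : small_gain Gamma)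
  (k0 kG kh : R) (hk0 : 0 < k0) (hkh : 0 < kh) (hkGh : kh < kG)
  (s : vec R N) (hs : nonneg s) (hfix : s = phi Gamma k0 kG kh s) :
  decay_set Gamma s /\ enorm s < kh / 2.
Proof.
have hsmall := fixed_point_small_norm s hmaps hsg hkh hs hfix.
split; last by rewrite ltr_pdivlMr // mulrC.
split=> // i.
rewrite [X in _ < X](congr1 (fun v => v i) hfix).
rewrite (phi_small_norm s i (ltW hk0) hkGh hsmall) ltrDl.
by rewrite subr_gt0.
Qed.
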